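(* Let $A_1$ be the real $2\times2\times2$ symmetric tensor with $a_{111}=1$, $a_{222}=1$ and all other entries $0$ (associated cubic $x^3+y^3$), and let $A_2$ be the real $2\times2\times2$ symmetric tensor with $a_{111}=1$, $a_{122}=a_{212}=a_{221}=-1$ and all other entries $0$ (associated cubic $x^3-3xy^2$). Then $A_1$ and $A_2$ are not $\operatorname{GL}_2(\mathbb{R})$-equivalent, but they have the same number of eigenpair classes and the same number of zero eigenvalues (both have $3$ eigenpair classes, none with zero eigenvalue).
   Context: Two real symmetric tensors $A,B$ of order $m$ and dimension $n$ are $\operatorname{GL}_n(\mathbb{R})$-equivalent if there is $P=(p_{ij})\in\operatorname{GL}_n(\mathbb{R})$ with $b_{j_1\dots j_m}=\sum_{i_1,\dots,i_m} a_{i_1\dots i_m}p_{i_1j_1}\cdots p_{i_mj_m}$; equivalently, their associated forms $f(\mathbf{x})=\sum a_{i_1\dots i_m}x_{i_1}\cdots x_{i_m}$ are related by $f(\mathbf{x})\mapsto f(P\mathbf{x})$. An eigenpair of $A$ is $(\lambda,\mathbf{x})$ with $\lambda\in\mathbb{C}$, $\mathbf{x}\in\mathbb{C}^n\setminus\{0\}$ and $A\mathbf{x}^{m-1}=\lambda\mathbf{x}$, where $(A\mathbf{x}^{m-1})_i=\sum_{i_2,\dots,i_m}a_{i i_2\dots i_m}x_{i_2}\cdots x_{i_m}$. Two eigenpairs $(\lambda,\mathbf{x}),(\lambda',\mathbf{x}')$ are equivalent if $\lambda'=t^{m-2}\lambda$, $\mathbf{x}'=t\mathbf{x}$ for some $t\in\mathbb{C}\setminus\{0\}$;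 the classes are eigenpair classes. The number of zero eigenvalues is the number of eigenpair classes with eigenvalue $0$. *)

From HB Require Import structures.
From mathcomp Require Import all_boot all_order all_algebra.
From mathcomp Require Import reals.
From mathcomp Require Import complex.
Set Implicit Arguments. Unset Strict Implicit. Unset Printing Implicit Defensive.
Import Order.TTheory GRing.Theory Num.Theory.
Local Open Scope ring_scope.

Definition tensor3 (R : Type) (n : nat) := 'I_n -> 'I_n -> 'I_n -> R.

Definition symmetric3 (R : Type) n (A : tensor3 R n) : Prop :=
  forall i j k, A i j k = A j i k /\ A i j k = A i k j.

Definition GL_equiv (R : realType) n (A B : tensor3 R n) : Prop :=
  exists P : 'M[R]_n, P \in unitmx /\
    forall j1 j2 j3, B j1 j2 j3 =
      \sum_(i1 < n) \sum_(i2 < n) \sum_(i3 < n)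
         A i1 i2 i3 * P i1 j1 * P i2 j2 * P i3 j3.

(* (A x^{m-1})_i for m = 3, with the real entries embedded in C = R[i]. *)
Definition tensor_apply (R : realType) n (A : tensor3 R n) (x : 'rV[R[i]]_n)
  (i : 'I_n) : R[i] :=
  \sum_(i2 < n) \sum_(i3 < n) (real_complex R (A i i2 i3)) * x 0 i2 * x 0 i3.

Definition eigenpair (R : realType) n (A : tensor3 R n)
  (lam : R[i]) (x : 'rV[R[i]]_n) : Prop :=
  x != 0 /\ forall i, tensor_apply A x i = lam * x 0 i.

(* Equivalence of eigenpairs for m = 3: lambda' = t^{m-2} lambda = t lambda,
   x' = t x, for some nonzero complex t. *)
Definition eigenpair_equiv (R : realType) n
  (p q : R[i] * 'rV[R[i]]_n) : Prop :=
  exists t : R[i], t != 0 /\ q.1 = t ^+ (3 - 2) * p.1 /\ q.2 = t *: p.2.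

Definition num_eig_classes_with (R : realType) n (A : tensor3 R n)
  (P : R[i] -> Prop) (k : nat) : Prop :=
  exists e : 'I_k -> R[i] * 'rV[R[i]]_n,
    (forall r, eigenpair A (e r).1 (e r).2 /\ P (e r).1) /\
    (forall r s, eigenpair_equiv (e r) (e s) -> r = s) /\
    (forall lam x, eigenpair A lam x -> P lam ->
       exists r, eigenpair_equiv (e r) (lam, x)).

Definition num_eigenpair_classes (R : realType) n (A : tensor3 R n) (k : nat) :=
  num_eig_classes_with A (fun _ => True) k.

Definition num_zero_eigenvalues (R : realType) n (A : tensor3 R n) (k : nat) :=
  num_eig_classes_with A (fun lam => lam = 0) k.

Definition A1 (R : realType) : tensor3 R 2 := fun i j k =>
  if [&& (i == 0 :> nat), (j == 0 :> nat) & (k == 0 :> nat)] then 1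
  else if [&& (i == 1 :> nat), (j == 1 :> nat) & (k == 1 :> nat)] then 1
  else 0.

(* A2: a111 = 1, a122 = a212 = a221 = -1, others 0  (cubic x^3 - 3xy^2). *)
Definition A2 (R : realType) : tensor3 R 2 := fun i j k =>
  if [&& (i == 0 :> nat), (j == 0 :> nat) & (k == 0 :> nat)] then 1
  else if ((i == 0 :> nat) + (j == 0 :> nat) + (k == 0 :> nat) == 1)%N then -1
  else 0.

From HB Require Import structures.
From mathcomp Require Import all_boot all_order all_algebra.
From mathcomp Require Import reals.
From mathcomp Require Import complex.
From mathcomp Require Import ring lra.
Import Order.TTheory GRing.Theory Num.Theory.
Local Open Scope ring_scope.
Set Implicit Arguments. Unset Strict Implicit.

(* Over the reals, b^3 + d^3 = 0 forces d = -b and a^3 + c^3 > 0 forces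
   a + c > 0.  A real substitution (x, y) -> (a x + b y, c x + d y) taking
   x^3 + y^3 to a form with coefficient tensor g, g_000 = 1 and g_111 = 0,
   therefore has g_011 = b^2 (a + c) >= 0, while x^3 - 3xy^2 has g_011 = -1.

   Eigenpairs of an order-3 tensor scale as (lambda, x) -> (t lambda, t x), so
   when 0 is not an eigenvalue, each class contains exactly one eigenpair of
   any fixed eigenvalue c <> 0.  The classes are thus counted by the
   eigenvectors of eigenvalue 1 of x^3 + y^3, namely (1,0), (0,1), (1,1), and
   by those of eigenvalue 2 of x^3 - 3xy^2, namely (2,0) and (-1, +-sqrt 3). *)

Lemma cube_addr_eq0 (R : realDomainType) (a c : R) :
  a ^+ 3 + c ^+ 3 = 0 -> c = - a.
Proof.
move=> h; apply/eqP; rewrite -addr_eq0 addrC.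
have : (a + c) * (a ^+ 2 - a * c + c ^+ 2) == 0 by rewrite -h; apply/eqP; ring.
rewrite mulf_eq0 => /orP[// | /eqP q0].
have c0 : c = 0.
  apply/eqP; rewrite -sqrf_eq0 eq_le sqr_ge0 andbT.
  by have := sqr_ge0 (2 * a - c); nra.
by rewrite c0 addr0 -sqrf_eq0 -[X in _ == X]q0 c0; apply/eqP; ring.
Qed.

Lemma cube_addr_gt0 (R : realDomainType) (a c : R) :
  0 < a ^+ 3 + c ^+ 3 -> 0 < a + c.
Proof.
move=> h; have q_ge0 : 0 <= a ^+ 2 - a * c + c ^+ 2.
  by have := sqr_ge0 (2 * a - c); have := sqr_ge0 c; nra.
have cube_factor : a ^+ 3 + c ^+ 3 = (a + c) * (a ^+ 2 - a * c + c ^+ 2).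
  by ring.
by rewrite cube_factor in h; nra.
Qed.

Lemma sqrf_eq_mul (F : idomainType) (lam a : F) :
  (a ^+ 2 == lam * a) = (a == 0) || (a == lam).
Proof. by rewrite -subr_eq0 expr2 -mulrBl mulf_eq0 subr_eq0 orbC. Qed.

Section EigenpairClasses.
Variables (R : realType) (n : nat) (A : tensor3 R n).

Lemma tensor_applyZ (t : R[i]) x j :
  tensor_apply A (t *: x) j = t ^+ 2 * tensor_apply A x j.
Proof.
rewrite /tensor_apply mulr_sumr; apply: eq_bigr => j2 _.
rewrite mulr_sumr; apply: eq_bigr => j3 _.
by rewrite !mxE; ring.
Qed.

Lemma eigenpairZ (t lam : R[i]) x :
  t != 0 -> eigenpair A lam x -> eigenpair A (t * lam) (t *: x).
Proof.
move=> t_neq0 [x_neq0 eq_x]; split; first by rewrite scaler_eq0 negb_or t_neq0.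
by move=> j; rewrite tensor_applyZ eq_x mxE; ring.
Qed.

Hypothesis not_eigenpair0 : forall x, ~ eigenpair A 0 x.

Lemma num_zero_eigenvalues0 : num_zero_eigenvalues A 0.
Proof.
exists (fun=> (0, 0)); split; [by case | split; first by case].
by move=> lam x eig_x lam0; rewrite lam0 in eig_x; have := not_eigenpair0 eig_x.
Qed.

Lemma num_eigenpair_classes_eigenvectors (c : R[i]) (s : seq 'rV[R[i]]_n) :
  c != 0 -> uniq s -> (forall x, eigenpair A c x <-> x \in s) ->
  num_eigenpair_classes A (size s).
Proof.
move=> c_neq0 s_uniq eig_s; exists (fun r => (c, s`_r)); split; [|split].
- by move=> r; split=> //; apply/eig_s/mem_nth.
- move=> r r' [t [_ /= [ct xt]]].
  have t1 : t = 1 by apply: (mulIf c_neq0); rewrite mul1r -ct.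
  apply/ord_inj/eqP; rewrite -(nth_uniq 0 (ltn_ord r) (ltn_ord r') s_uniq).
  by rewrite xt t1 scale1r.
move=> lam x eig_x _.
have lam_neq0 : lam != 0.
  by apply/eqP=> lam0; rewrite lam0 in eig_x; apply: not_eigenpair0 eig_x.
have /eig_s xs : eigenpair A c ((c / lam) *: x).
  rewrite -{1}(divfK lam_neq0 c); apply: eigenpairZ eig_x.
  by rewrite mulf_neq0 ?invr_eq0.
have idx : (index ((c / lam) *: x) s < size s)%N by rewrite index_mem.
exists (Ordinal idx), (lam / c); split; first by rewrite mulf_neq0 ?invr_eq0.
split=> /=; first by rewrite expr1 divfK.
by rewrite nth_index // scalerA mulf_div [c * _]mulrC divff ?scale1r ?mulf_neq0.
Qed.

End EigenpairClasses.

Lemma forall_ord2 (P : 'I_2 -> Prop) : (forall j, P j) <-> P 0 /\ P 1.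
Proof.
split=> [P_all | [P0 P1] [[|[|//]] j_lt]]; first by split.
- by rewrite (_ : Ordinal j_lt = 0) //; apply: val_inj.
- by rewrite (_ : Ordinal j_lt = 1) //; apply: val_inj.
Qed.

Definition vec2 (T : Type) (a b : T) : 'rV[T]_2 :=
  \row_(j < 2) if j == 0 then a else b.

Lemma vec2E (T : Type) (x : 'rV[T]_2) : x = vec2 (x 0 0) (x 0 1).
Proof. by apply/rowP/forall_ord2; rewrite !mxE. Qed.

Lemma eq_vec2 (T : eqType) (a b a' b' : T) :
  (vec2 a b == vec2 a' b') = (a == a') && (b == b').
Proof.
apply/eqP/andP => [eq_ab | [/eqP-> /eqP->] //].
by have /rowP/forall_ord2 := eq_ab; rewrite !mxE /= => -[-> ->].
Qed.

Lemma vec2_eq0 (V : zmodType) (a b : V) :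
  (vec2 a b == 0) = (a == 0) && (b == 0).
Proof. by rewrite -eq_vec2; congr (_ == _); apply/rowP/forall_ord2; rewrite !mxE. Qed.

Section BinaryCubics.
Variable R : realType.

Lemma A1_symmetric : symmetric3 (A1 R).
Proof. by move=> [[|[|//]] ?] [[|[|//]] ?] [[|[|//]] ?]. Qed.

Lemma A2_symmetric : symmetric3 (A2 R).
Proof. by move=> [[|[|//]] ?] [[|[|//]] ?] [[|[|//]] ?]. Qed.

Lemma A1_transformE (P : 'M[R]_2) j1 j2 j3 :
  \sum_(i1 < 2) \sum_(i2 < 2) \sum_(i3 < 2)
     A1 R i1 i2 i3 * P i1 j1 * P i2 j2 * P i3 j3 =
  P 0 j1 * P 0 j2 * P 0 j3 + P 1 j1 * P 1 j2 * P 1 j3.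
Proof.
rewrite !big_ord_recl !big_ord0 /A1 /=.
have -> : lift ord0 ord0 = 1 :> 'I_2 by apply/val_inj.
by ring.
Qed.

Lemma A1_A2_not_GL_equiv : ~ GL_equiv (A1 R) (A2 R).
Proof.
move=> [P [_ transformE]].
have := transformE 0 0 0; have := transformE 1 1 1; have := transformE 0 1 1.
rewrite !A1_transformE /A2 /=.
set a := P 0 0; set b := P 0 1; set c := P 1 0; set d := P 1 1.
move=> e011 e111 e000.
have db : d = - b by apply: cube_addr_eq0; rewrite e111; ring.
have ac_gt0 : 0 < a + c.
  by apply: cube_addr_gt0; have -> : a ^+ 3 + c ^+ 3 = 1 by rewrite e000; ring.
have b2_ac : b ^+ 2 * (a + c) = -1 by rewrite e011 db; ring.
have : 0 <= b ^+ 2 * (a + c) by rewrite mulr_ge0 ?sqr_ge0 ?ltW.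
by rewrite b2_ac; lra.
Qed.

Lemma eigenpair_vec2P (A : tensor3 R 2) lam a b :
  eigenpair A lam (vec2 a b) <->
  [/\ vec2 a b != 0, tensor_apply A (vec2 a b) 0 = lam * a
    & tensor_apply A (vec2 a b) 1 = lam * b].
Proof. by rewrite /eigenpair forall_ord2 !mxE /=; split=> [[? []] | []]. Qed.

Lemma tensor_apply_vec2 (A : tensor3 R 2) a b j :
  tensor_apply A (vec2 a b) j =
  real_complex R (A j 0 0) * a ^+ 2 +
  real_complex R (A j 0 1 + A j 1 0) * a * b +
  real_complex R (A j 1 1) * b ^+ 2.
Proof.
rewrite /tensor_apply !big_ord_recl !big_ord0 !mxE /= rmorphD.
have -> : lift ord0 ord0 = 1 :> 'I_2 by apply/val_inj.
by ring.
Qed.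

Lemma eigenpair_A1 lam a b :
  eigenpair (A1 R) lam (vec2 a b) <->
  [/\ vec2 a b != 0, a ^+ 2 = lam * a & b ^+ 2 = lam * b].
Proof.
rewrite eigenpair_vec2P !tensor_apply_vec2 /A1 /= addr0 rmorph0 rmorph1.
by rewrite !mul0r !mul1r !addr0 add0r.
Qed.

Lemma eigenpair_A2 lam a b :
  eigenpair (A2 R) lam (vec2 a b) <->
  [/\ vec2 a b != 0, a ^+ 2 - b ^+ 2 = lam * a & - (2 * a * b) = lam * b].
Proof.
rewrite eigenpair_vec2P !tensor_apply_vec2 /A2 /= addr0 rmorph0 rmorphB !rmorphN.
by rewrite rmorph1; split=> -[? <- <-]; split=> //; ring.
Qed.

Lemma not_eigenpair0_A1 x : ~ eigenpair (A1 R) 0 x.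
Proof.
rewrite [x]vec2E eigenpair_A1 vec2_eq0 !mul0r; move: (x 0 0) (x 0 1) => a b.
by case=> /negP nz a0 b0; apply: nz; rewrite -sqrf_eq0 -[b == 0]sqrf_eq0 a0 b0 eqxx.
Qed.

Lemma not_eigenpair0_A2 x : ~ eigenpair (A2 R) 0 x.
Proof.
rewrite [x]vec2E eigenpair_A2 vec2_eq0 !mul0r; move: (x 0 0) (x 0 1) => a b.
case=> /negP nz /eqP; rewrite subr_eq0 => /eqP a2_b2 /eqP.
rewrite oppr_eq0 -mulrA mulf_eq0 pnatr_eq0 /= mulf_eq0 => ab0.
apply: nz; rewrite -[b == 0]sqrf_eq0 -a2_b2 sqrf_eq0 andbb.
case/orP: ab0 => // /eqP b0.
by rewrite -sqrf_eq0 a2_b2 b0 expr0n.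
Qed.

Lemma eigenpair1_A1 x :
  eigenpair (A1 R) 1 x <-> x \in [:: vec2 1 0; vec2 0 1; vec2 1 1].
Proof.
rewrite [x]vec2E eigenpair_A1 !inE !eq_vec2 vec2_eq0; move: (x 0 0) (x 0 1) => a b.
transitivity [&& ~~ ((a == 0) && (b == 0)), (a == 0) || (a == 1)
                & (b == 0) || (b == 1)].
  by rewrite -!sqrf_eq_mul; split=> [[nz /eqP-> /eqP->] | /and3P[nz /eqP ? /eqP ?]];
    [rewrite nz | split].
case: (eqVneq a 0) => [->|_]; case: (eqVneq b 0) => [->|_];
  by rewrite ?eqxx ?(eq_sym 0 1) ?oner_eq0 /= ?andbT ?andbF ?orbF.
Qed.

Lemma eigenpair2_A2 x :
  eigenpair (A2 R) 2 x <->
  x \in [:: vec2 2 0; vec2 (-1) (sqrtC 3); vec2 (-1) (- sqrtC 3)].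
Proof.
rewrite [x]vec2E eigenpair_A2 !inE !eq_vec2 vec2_eq0; move: (x 0 0) (x 0 1) => a b.
split=> [[nz e0 e1] | ].
  have b_a1 : 2 * (b * (a + 1)) = 0.
    by rewrite -(subrr (2 * b)) -[X in _ = _ - X]e1; ring.
  move/eqP: b_a1; rewrite !mulf_eq0 pnatr_eq0 /= addr_eq0 => /orP[/eqP b0 | /eqP a1].
    move: nz e0; rewrite b0 eqxx expr0n subr0 andbT => a_neq0 /eqP.
    by rewrite sqrf_eq_mul (negPf a_neq0) /= => ->.
  have b2_3 : b ^+ 2 - 3 = 2 * a - (a ^+ 2 - b ^+ 2) by rewrite a1; ring.
  move/eqP: b2_3; rewrite e0 subrr subr_eq0 -{1}(sqrtCK (3 : R[i])) eqf_sqr.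
  by rewrite a1 eqxx /=; case/orP=> ->; rewrite ?orbT.
case/or3P=> /andP[/eqP-> /eqP->]; split;
  by rewrite ?sqrrN ?sqrtCK ?pnatr_eq0 ?oppr_eq0 ?oner_eq0 //; ring.
Qed.

Lemma num_eigenpair_classes_A1 : num_eigenpair_classes (A1 R) 3.
Proof.
apply: (num_eigenpair_classes_eigenvectors not_eigenpair0_A1 (oner_neq0 _) _
          eigenpair1_A1).
by rewrite /= !inE !eq_vec2 (eq_sym 0) oner_eq0 !andbF.
Qed.

Lemma num_eigenpair_classes_A2 : num_eigenpair_classes (A2 R) 3.
Proof.
have sqrt3_neq0 : sqrtC (3 : R[i]) != 0 by rewrite sqrtC_eq0 pnatr_eq0.
apply: (num_eigenpair_classes_eigenvectors not_eigenpair0_A2 _ _ eigenpair2_A2).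
  by rewrite pnatr_eq0.
rewrite /= !inE !eq_vec2 (eq_sym (sqrtC 3)) eqNr (negPf sqrt3_neq0) !andbF.
by rewrite -addr_eq0 -mulrSr pnatr_eq0.
Qed.

End BinaryCubics.

Theorem proposition3p2 (R : realType) :
  symmetric3 (A1 R) /\ symmetric3 (A2 R) /\
  ~ GL_equiv (A1 R) (A2 R) /\
  num_eigenpair_classes (A1 R) 3 /\ num_eigenpair_classes (A2 R) 3 /\
  num_zero_eigenvalues (A1 R) 0 /\ num_zero_eigenvalues (A2 R) 0.
Proof.
split; first exact: A1_symmetric.
split; first exact: A2_symmetric.
split; first exact: A1_A2_not_GL_equiv.
split; first exact: num_eigenpair_classes_A1.
split; first exact: num_eigenpair_classes_A2.
split; apply: num_zero_eigenvalues0.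
- exact: not_eigenpair0_A1.
- exact: not_eigenpair0_A2.
Qed.
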